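(* Consider Algorithm ProxSAGA (described in the context) with $b=1$, $\eta=1/(5Ln)$, run for $T\ge1$ iterations. Then the output $x_a$ satisfies $$\mathbb E\big[\|\mathcal G_\eta(x_a)\|^2\big]\le \frac{50Ln^2}{5n-2}\cdot\frac{F(x^0)-F(x^* )}{T},$$ where $x^*$ is an optimal solution of $\min_x F(x)$.
   Context: Setting: Let $n,d\ge 1$ be integers and $[n]=\{1,\dots,n\}$. Let $f_1,\dots,f_n:\mathbb R^d\to\mathbb R$ be differentiable (possibly nonconvex) functions, each $L$-smooth for some $L>0$, i.e. $\|\nabla f_i(x)-\nabla f_i(y)\|\le L\|x-y\|$ for all $x,y\in\mathbb R^d$ and $i\in[n]$. Let $f=\frac1n\sum_{i=1}^n f_i$. Let $h:\mathbb R^d\to\mathbb R\cup\{+\infty\}$ be proper, lower semicontinuous and convex, with closed domain. Let $F=f+h$, and let $x^*$ be a global minimizer of $F$ on $\mathbb R^d$ (assumed to exist). For $\eta>0$, $\mathrm{prox}_{\eta h}(x):=\arg\min_{y\in\mathbb R^d}\big(h(y)+\frac1{2\eta}\|y-x\|^2\big)$, and the gradient mapping is $\mathcal G_\eta(x):=\frac1\eta\big[x-\mathrm{prox}_{\eta h}(x-\eta\nabla f(x))\big]$. Algorithm ProxSAGA$(x^0,T,b,\eta)$: Given $x^0\in\mathbb R^d$, positive integers $T,b$ and $\eta>0$, set $\alpha^0_i=x^0$ for all $i\in[n]$. For $t=0,1,\dots$ let $g^t=\frac1n\sum_{i=1}^n\nabla f_i(\alpha^t_i)$. For $t=0,\dots,T-1$: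 draw two multisets $I_t,J_t$, each consisting of $b$ indices drawn independently and uniformly at random from $[n]$ (with replacement; $I_t$, $J_t$ independent of each other and of all previous draws); set $v^t=\frac1b\sum_{i\in I_t}\big(\nabla f_i(x^t)-\nabla f_i(\alpha^t_i)\big)+g^t$ and $x^{t+1}=\mathrm{prox}_{\eta h}(x^t-\eta v^t)$; set $\alpha^{t+1}_j=x^t$ for $j\in J_t$ and $\alpha^{t+1}_j=\alpha^t_j$ for $j\notin J_t$. The output $x_a$ is chosen uniformly at random from $\{x^0,\dots,x^{T-1}\}$. Expectations are over all randomness of the algorithm. *)

From Stdlib Require Import Reals.
From mathcomp Require Import all_boot.
Set Implicit Arguments. Unset Strict Implicit. Unset Printing Implicit Defensive.

Local Open Scope R_scope.

Definition vec (d : nat) := 'I_d -> R.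

Definition rsum (I : finType) (F : I -> R) : R := \big[Rplus/0]_(i : I) F i.

Definition vadd d (x y : vec d) : vec d := fun i => x i + y i.
Definition vsub d (x y : vec d) : vec d := fun i => x i - y i.
Definition vscale d (a : R) (x : vec d) : vec d := fun i => a * x i.
Definition dot d (x y : vec d) : R := rsum (fun i : 'I_d => x i * y i).
Definition norm d (x : vec d) : R := sqrt (dot x x).

Definition vavg n d (v : 'I_n -> vec d) : vec d :=
  fun k => / INR n * rsum (fun i : 'I_n => v i k).

Definition is_gradient d (f : vec d -> R) (g : vec d -> vec d) : Prop :=
  forall x eps, 0 < eps -> exists delta, 0 < delta /\
    forall hv, norm hv < delta ->
      Rabs (f (vadd x hv) - f x - dot (g x) hv) <= eps * norm hv.

Definition lipschitz_grad d (L : R) (g : vec d -> vec d) : Prop :=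
  forall x y, norm (vsub (g x) (g y)) <= L * norm (vsub x y).

(* extended-real-valued h : None encodes +infinity *)
Definition ereal_gt (a : R) (v : option R) : Prop :=
  match v with None => True | Some w => a < w end.

Definition proper_fun d (h : vec d -> option R) : Prop :=
  exists x a, h x = Some a.

Definition convex_fun d (h : vec d -> option R) : Prop :=
  forall x y a b lam, 0 <= lam <= 1 -> h x = Some a -> h y = Some b ->
    exists c, h (vadd (vscale lam x) (vscale (1 - lam) y)) = Some c /\
              c <= lam * a + (1 - lam) * b.

Definition lsc_fun d (h : vec d -> option R) : Prop :=
  forall x a, ereal_gt a (h x) ->
    exists delta, 0 < delta /\
      forall y, norm (vsub y x) < delta -> ereal_gt a (h y).

Definition closed_dom d (h : vec d -> option R) : Prop :=
  forall x, h x = None -> exists delta, 0 < delta /\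
      forall y, norm (vsub y x) < delta -> h y = None.

Definition is_prox d (eta : R) (h : vec d -> option R) (x p : vec d) : Prop :=
  exists hp, h p = Some hp /\
    forall y hy, h y = Some hy ->
      hp + / (2 * eta) * (norm (vsub p x))^2 <= hy + / (2 * eta) * (norm (vsub y x))^2.

Definition favg n d (fs : 'I_n -> vec d -> R) (x : vec d) : R :=
  / INR n * rsum (fun i : 'I_n => fs i x).
Definition gradf n d (gs : 'I_n -> vec d -> vec d) (x : vec d) : vec d :=
  vavg (fun i => gs i x).

Definition grad_map n d (gs : 'I_n -> vec d -> vec d) (prox : vec d -> vec d)
  (eta : R) (x : vec d) : vec d :=
  vscale (/ eta) (vsub x (prox (vsub x (vscale eta (gradf gs x))))).

(* ProxSAGA with b = 1: state (x^t, alpha^t); one step uses I_t = {i}, J_t = {j} *)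
Definition saga_state n d := (vec d * ('I_n -> vec d))%type.

Definition saga_step n d (gs : 'I_n -> vec d -> vec d) (prox : vec d -> vec d)
  (eta : R) (st : saga_state n d) (ij : 'I_n * 'I_n) : saga_state n d :=
  let (x, alpha) := st in
  let (i, j) := ij in
  let g := vavg (fun k => gs k (alpha k)) in
  let v := vadd (vsub (gs i x) (gs i (alpha i))) g in
  (prox (vsub x (vscale eta v)),
   fun k => if k == j then x else alpha k).

(* sample space: the draws (I_t, J_t), t < T, uniformly distributed *)
Definition outcome (n T : nat) := {ffun 'I_T -> 'I_n * 'I_n}.

Definition saga_iter n d T (gs : 'I_n -> vec d -> vec d) (prox : vec d -> vec d)
  (eta : R) (x0 : vec d) (omega : outcome n T) (t : nat) : vec d :=
  fst (foldl (saga_step gs prox eta) (x0, fun _ => x0)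
             (take t [seq omega s | s <- enum 'I_T])).

(* E ||G_eta(x_a)||^2, x_a uniform on {x^0,...,x^{T-1}}, independent of the draws *)
Definition expected_gm_sq n d (gs : 'I_n -> vec d -> vec d)
  (prox : vec d -> vec d) (eta : R) (x0 : vec d) (T : nat) : R :=
  / INR T * rsum (fun t : 'I_T =>
     / INR #|{: outcome n T}| *
       rsum (fun omega : outcome n T =>
         (norm (grad_map gs prox eta (saga_iter gs prox eta x0 omega t)))^2)).

From Stdlib Require Import Reals Lra FunctionalExtensionality.
From HB Require Import structures.
From mathcomp Require Import all_boot.
Set Implicit Arguments. Unset Strict Implicit.
Local Open Scope R_scope.

(* The Lyapunov function Phi(x, alpha) = F(x) + L/(5n) sum_k ||x - alpha_k||^2 decreases in
   expectation by (eta/2) ||G_eta(x)||^2 at every step.  Comparing the stochastic step y with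
   the exact proximal-gradient step z through the optimality conditions of both proximal
   problems and L-smoothness gives
     F(y) <= F(x) + eta/2 ||v - grad f(x)||^2 - eta/2 ||G_eta(x)||^2 - (1/(2 eta) - L/2) ||y - x||^2;
   the SAGA estimate v has variance at most (L^2/n) sum_k ||x - alpha_k||^2, and Young's
   inequality bounds the new table distances ||y - alpha_k||^2 by ||y - x||^2 and
   ||x - alpha_k||^2.  For eta = 1/(5Ln) the ||y - x||^2 terms have a nonpositive total
   coefficient.  Telescoping over T steps and Phi >= min F bound the average of
   E ||G_eta(x^t)||^2.  Expectations are averages over all draw sequences; since x^t does not
   depend on the t-th draw, that draw can be averaged independently. *)

Lemma Rplus_associative : associative Rplus.
Proof. by move=> a b c; rewrite Rplus_assoc. Qed.

HB.instance Definition _ :=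
  Monoid.isComLaw.Build R 0 Rplus Rplus_associative Rplus_comm Rplus_0_l.

Section FiniteSums.
Variable I : finType.
Implicit Types F G : I -> R.

Lemma rsum_ext F G : (forall i, F i = G i) -> rsum F = rsum G.
Proof. by move=> FG; apply: eq_bigr => i _. Qed.

Lemma rsum0 : rsum (fun _ : I => 0) = 0.
Proof. exact: big1. Qed.

Lemma rsumD F G : rsum (fun i => F i + G i) = rsum F + rsum G.
Proof. exact: big_split. Qed.

Lemma rsumZ (a : R) F : rsum (fun i => a * F i) = a * rsum F.
Proof.
rewrite /rsum; elim/big_rec2: _ => [|i x y _ ->]; first by rewrite Rmult_0_r.
by rewrite Rmult_plus_distr_l.
Qed.

Lemma rsumN F : rsum (fun i => - F i) = - rsum F.
Proof.
rewrite -(Rmult_1_l (rsum F)) Ropp_mult_distr_l -rsumZ.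
by apply: rsum_ext => i; ring.
Qed.

Lemma rsumB F G : rsum (fun i => F i - G i) = rsum F - rsum G.
Proof. by rewrite /Rminus -rsumN -rsumD. Qed.

Lemma rsum_const (a : R) : rsum (fun _ : I => a) = INR #|I| * a.
Proof.
rewrite /rsum big_const; elim: #|I| => [|m IH]; first by rewrite /=; ring.
by rewrite iterS IH S_INR; ring.
Qed.

Lemma ler_rsum F G : (forall i, F i <= G i) -> rsum F <= rsum G.
Proof.
move=> FG; rewrite /rsum; elim/big_rec2: _ => [|i x y _ Hxy]; first lra.
by have := FG i; lra.
Qed.

Lemma rsum_ge0 F : (forall i, 0 <= F i) -> 0 <= rsum F.
Proof. by move=> F0; rewrite -rsum0; apply: ler_rsum. Qed.

Lemma rsum_delta (k : I) F : rsum (fun j => if j == k then F j else 0) = F k.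
Proof. by rewrite /rsum (bigD1 k) //= eqxx big1 ?Rplus_0_r // => j /negbTE ->. Qed.

End FiniteSums.

Lemma exchange_rsum {I J : finType} (F : I -> J -> R) :
  rsum (fun i => rsum (F i)) = rsum (fun j => rsum (fun i => F i j)).
Proof. exact: exchange_big. Qed.

Lemma rsum_pair {I J : finType} (F : I * J -> R) :
  rsum F = rsum (fun i => rsum (fun j => F (i, j))).
Proof. by rewrite /rsum pair_bigA; apply: eq_bigr => -[]. Qed.

Definition sqnorm {d} (u : vec d) : R := dot u u.

Section Vectors.
Variable d : nat.
Implicit Types u v x y z : vec d.

Lemma sqnorm_ge0 u : 0 <= sqnorm u.
Proof. by apply: rsum_ge0 => i; nra. Qed.

Lemma norm_ge0 u : 0 <= norm u.
Proof. exact: sqrt_pos. Qed.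

Lemma norm_sq u : norm u ^ 2 = sqnorm u.
Proof. by rewrite /norm /= Rmult_1_r sqrt_sqrt //; apply: sqnorm_ge0. Qed.

Lemma dotZr a u v : dot u (vscale a v) = a * dot u v.
Proof. by rewrite /dot -rsumZ; apply: rsum_ext => i; rewrite /vscale; ring. Qed.

Lemma norm_scale a u : norm (vscale a u) = Rabs a * norm u.
Proof.
rewrite /norm; have -> : dot (vscale a u) (vscale a u) = Rsqr a * dot u u.
  by rewrite /dot -rsumZ; apply: rsum_ext => i; rewrite /vscale /Rsqr; ring.
by rewrite sqrt_mult_alt ?sqrt_Rsqr_abs //; apply: Rle_0_sqr.
Qed.

Lemma sqnorm_le_of_norm_le u v K :
  0 <= K -> norm u <= K * norm v -> sqnorm u <= K ^ 2 * sqnorm v.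
Proof.
move=> K0 uv; rewrite -!norm_sq.
have -> : K ^ 2 * norm v ^ 2 = (K * norm v) ^ 2 by ring.
by apply: pow_incr; split; [apply: norm_ge0 | ].
Qed.

Lemma young u v beta :
  0 < beta -> dot u v <= / (2 * beta) * sqnorm u + beta / 2 * sqnorm v.
Proof.
move=> beta0; rewrite /sqnorm /dot -!rsumZ -rsumD; apply: ler_rsum => i.
have sq0 : 0 <= / (2 * beta) * (u i - beta * v i) ^ 2.
  by apply: Rmult_le_pos; [apply/Rlt_le/Rinv_0_lt_compat; lra | apply: pow2_ge_0].
have -> : / (2 * beta) * (u i * u i) + beta / 2 * (v i * v i)
   = u i * v i + / (2 * beta) * (u i - beta * v i) ^ 2 by field; lra.
lra.
Qed.

Lemma dot_le_of_norm_le u v K :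
  0 < K -> norm u <= K * norm v -> dot u v <= K * sqnorm v.
Proof.
move=> K0 uv; apply: Rle_trans (young u v K0) _.
have := sqnorm_le_of_norm_le (Rlt_le _ _ K0) uv.
have Kinv : / (2 * K) * (K ^ 2 * sqnorm v) = K / 2 * sqnorm v by field; lra.
have : 0 < / (2 * K) by apply: Rinv_0_lt_compat; lra.
nra.
Qed.

Lemma sqnorm_sub_le beta x y z : 0 < beta ->
  sqnorm (vsub y z) <= (1 + beta) * sqnorm (vsub y x) + (1 + / beta) * sqnorm (vsub x z).
Proof.
move=> beta0; rewrite /sqnorm /dot -!rsumZ -rsumD; apply: ler_rsum => k; rewrite /vsub.
have sq0 : 0 <= / beta * (beta * (y k - x k) - (x k - z k)) ^ 2.
  by apply: Rmult_le_pos; [apply/Rlt_le/Rinv_0_lt_compat | apply: pow2_ge_0].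
have -> : (1 + beta) * ((y k - x k) * (y k - x k)) + (1 + / beta) * ((x k - z k) * (x k - z k))
  = (y k - z k) * (y k - z k) + / beta * (beta * (y k - x k) - (x k - z k)) ^ 2.
  by field; lra.
lra.
Qed.

End Vectors.

Lemma INR_gt0 n : (0 < n)%N -> 0 < INR n.
Proof. by move=> n_gt0; apply/lt_0_INR/ltP. Qed.

Lemma INR_ge1 n : (0 < n)%N -> 1 <= INR n.
Proof. by move=> n_gt0; have := le_INR 1 n; apply; apply/leP. Qed.

Section Averages.
Variables n d : nat.
Hypothesis n_gt0 : (0 < n)%N.

Lemma dot_vavg (u : 'I_n -> vec d) (w : vec d) :
  dot (vavg u) w = / INR n * rsum (fun i => dot (u i) w).
Proof.
rewrite /dot /vavg (exchange_rsum (fun i k => u i k * w k)) -rsumZ.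
apply: rsum_ext => k; rewrite Rmult_assoc; congr (_ * _).
by rewrite Rmult_comm -rsumZ; apply: rsum_ext => i; ring.
Qed.

Lemma sum_sqnorm_centered_le (a : 'I_n -> vec d) :
  rsum (fun i => sqnorm (vsub (a i) (vavg a))) <= rsum (fun i => sqnorm (a i)).
Proof.
rewrite /sqnorm /dot (exchange_rsum (fun i k => vsub (a i) (vavg a) k * vsub (a i) (vavg a) k)).
rewrite (exchange_rsum (fun i k => a i k * a i k)); apply: ler_rsum => k.
set m := vavg a k.
have sum_a : rsum (fun i => a i k) = INR n * m.
  by rewrite /m /vavg -Rmult_assoc Rinv_r ?Rmult_1_l //; have := INR_gt0 n_gt0; lra.
have -> : rsum (fun i => vsub (a i) (vavg a) k * vsub (a i) (vavg a) k)
   = rsum (fun i => a i k * a i k) + (-2 * m) * rsum (fun i => a i k)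
     + rsum (fun _ : 'I_n => m * m).
  by rewrite -rsumZ -!rsumD; apply: rsum_ext => i; rewrite /vsub -/m; ring.
rewrite rsum_const card_ord sum_a.
have : 0 <= INR n * (m * m) by apply: Rmult_le_pos; [apply: pos_INR | apply: Rle_0_sqr].
lra.
Qed.

Lemma sum_sqnorm_table_update (y x : vec d) (al : 'I_n -> vec d) :
  rsum (fun j => rsum (fun k => sqnorm (vsub y (if k == j then x else al k))))
  = (INR n - 1) * rsum (fun k => sqnorm (vsub y (al k))) + INR n * sqnorm (vsub y x).
Proof.
rewrite (exchange_rsum (fun j k => sqnorm (vsub y (if k == j then x else al k)))).
have row k : rsum (fun j => sqnorm (vsub y (if k == j then x else al k)))
    = rsum (fun j => sqnorm (vsub y (al k))
                     + (if j == k then sqnorm (vsub y x) - sqnorm (vsub y (al k)) else 0)).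
  by apply: rsum_ext => j; rewrite eq_sym; case: eqP => _; ring.
rewrite (rsum_ext row).
under rsum_ext => k do rewrite rsumD rsum_const rsum_delta card_ord.
by rewrite rsumD rsumB rsumZ rsum_const card_ord; ring.
Qed.

End Averages.

Lemma le0_of_le_scaled (A B : R) :
  0 <= B -> (forall lam, 0 < lam <= 1 -> A <= lam * B) -> A <= 0.
Proof.
move=> B0 AB; apply: Rnot_lt_le => A0.
have C0 : 0 < A + B + 1 by lra.
have Cinv : / (A + B + 1) * (A + B + 1) = 1 by apply: Rinv_l; lra.
have Cinv0 : 0 < / (A + B + 1) by apply: Rinv_0_lt_compat.
have lam01 : 0 < A * / (A + B + 1) <= 1 by split; nra.
by have := AB _ lam01; nra.
Qed.

Section Prox.
Variables (d : nat) (eta : R) (h : vec d -> option R) (x p : vec d) (hp : R).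
Hypotheses (eta_gt0 : 0 < eta) (h_convex : convex_fun h).
Hypotheses (p_prox : is_prox eta h x p) (hp_def : h p = Some hp).

(* The first-order condition (x - p) / eta in the subdifferential of h at p, obtained by
   comparing p with the points of the segment [p, y]. *)
Lemma prox_variational y hy :
  h y = Some hy -> hp <= hy + / eta * dot (vsub p x) (vsub y p).
Proof.
move=> hy_def; have [hp' [hp'_def p_min]] := p_prox.
rewrite hp_def in hp'_def; move: p_min; case: hp'_def => <- p_min.
set k := / (2 * eta); set D := dot (vsub p x) (vsub y p).
have k0 : 0 < k by apply: Rinv_0_lt_compat; lra.
have k2 : / eta = 2 * k by rewrite /k; field; lra.
suff le0 : hp - hy - 2 * k * D <= 0 by rewrite k2; lra.
apply: (@le0_of_le_scaled _ (k * sqnorm (vsub y p))).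
  by apply: Rmult_le_pos; [lra | apply: sqnorm_ge0].
move=> lam lam01.
have [c [c_def c_le]] := h_convex (lam := lam) ltac:(lra) hy_def hp_def.
have := p_min _ _ c_def; rewrite !norm_sq.
have -> : sqnorm (vsub (vadd (vscale lam y) (vscale (1 - lam) p)) x)
    = sqnorm (vsub p x) + 2 * lam * D + lam ^ 2 * sqnorm (vsub y p).
  rewrite /D /sqnorm /dot -!rsumZ -!rsumD; apply: rsum_ext => i.
  by rewrite /vsub /vadd /vscale; ring.
move=> min_c; apply: (Rmult_le_reg_l lam); first lra.
rewrite -/k in min_c; nra.
Qed.

End Prox.

Section Smoothness.
Variables (d : nat) (f : vec d -> R) (g : vec d -> vec d).
Hypothesis f_grad : is_gradient f g.
Variables x hv : vec d.

Let line (t : R) : vec d := vadd x (vscale t hv).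

Lemma derivable_pt_lim_line t :
  derivable_pt_lim (fun s => f (line s)) t (dot (g (line t)) hv).
Proof.
move=> eps eps0; set N := norm hv; have N0 : 0 <= N := norm_ge0 hv.
have eps'0 : 0 < eps / (N + 1) by apply: Rdiv_lt_0_compat; lra.
have [delta [delta0 small]] := f_grad (line t) eps'0.
have delta'0 : 0 < delta / (N + 1) by apply: Rdiv_lt_0_compat; lra.
exists (mkposreal _ delta'0) => s s0 /= s_small.
have s_pos : 0 < Rabs s by apply: Rabs_pos_lt.
have s_delta : norm (vscale s hv) < delta.
  rewrite norm_scale -/N.
  have -> : delta = delta / (N + 1) * (N + 1) by field; lra.
  by apply: Rle_lt_trans (_ : Rabs s * N <= Rabs s * (N + 1)) _; nra.
have := small _ s_delta; rewrite norm_scale dotZr -/N.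
have -> : vadd (line t) (vscale s hv) = line (t + s).
  by apply: functional_extensionality => k; rewrite /line /vadd /vscale; ring.
set E := f (line (t + s)) - f (line t) - s * dot (g (line t)) hv => err.
have -> : (f (line (t + s)) - f (line t)) / s - dot (g (line t)) hv = E * / s.
  by rewrite /E; field.
rewrite Rabs_mult Rabs_inv; apply: (Rmult_lt_reg_r (Rabs s)) => //.
rewrite Rmult_assoc Rinv_l ?Rmult_1_r; last lra.
apply: Rle_lt_trans err _.
have -> : eps / (N + 1) * (Rabs s * N) = eps * Rabs s - eps * Rabs s / (N + 1).
  by field; lra.
have : 0 < eps * Rabs s / (N + 1) by apply: Rdiv_lt_0_compat; nra.
lra.
Qed.

Variable L : R.
Hypotheses (g_lip : lipschitz_grad L g) (L_gt0 : 0 < L).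

Lemma dot_grad_line_le t : 0 < t ->
  dot (g (line t)) hv <= dot (g x) hv + L * t * sqnorm hv.
Proof.
move=> t0; set a := vsub (g (line t)) (g x).
have -> : dot (g (line t)) hv = dot (g x) hv + dot a hv.
  by rewrite /a /dot -rsumD; apply: rsum_ext => k; rewrite /vsub; ring.
suff : dot a hv <= L * t * sqnorm hv by lra.
apply: dot_le_of_norm_le; first nra.
have := g_lip (line t) x.
have -> : vsub (line t) x = vscale t hv.
  by apply: functional_extensionality => k; rewrite /vsub /line /vadd /vscale; ring.
by rewrite norm_scale Rabs_right; [rewrite Rmult_assoc | lra].
Qed.

(* Mean value theorem applied to f(x + t hv) minus its quadratic upper model. *)
Lemma descent_lemma :
  f (vadd x hv) <= f x + dot (g x) hv + L / 2 * sqnorm hv.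
Proof.
set A := dot (g x) hv; set C := L / 2 * sqnorm hv.
pose psi t := f (line t) - (A * t + C * (t * t)).
have model' c : derivable_pt_lim (fun t => A * t + C * (t * t)) c
    (A * 1 + C * (1 * c + c * 1)).
  apply: (derivable_pt_lim_plus _ _ _ _ _ (derivable_pt_lim_scal _ _ _ _ _)
                                (derivable_pt_lim_scal _ _ _ _ _)).
    exact: derivable_pt_lim_id.
  exact: (derivable_pt_lim_mult _ _ _ _ _ (derivable_pt_lim_id c) (derivable_pt_lim_id c)).
have psi' c : 0 <= c <= 1 ->
    derivable_pt_lim psi c (dot (g (line c)) hv - (A * 1 + C * (1 * c + c * 1))).
  by move=> _; apply: (derivable_pt_lim_minus _ _ _ _ _ (derivable_pt_lim_line c) (model' c)).
have [c [psi_diff [c0 _]]] := MVT_cor2 psi _ 0 1 Rlt_0_1 psi'.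
have line0 : line 0 = x.
  by apply: functional_extensionality => k; rewrite /line /vadd /vscale; ring.
have line1 : line 1 = vadd x hv.
  by apply: functional_extensionality => k; rewrite /line /vadd /vscale; ring.
move: psi_diff (dot_grad_line_le c0); rewrite /psi /= line0 line1 -/A /C; nra.
Qed.

End Smoothness.

(* Junk value 0 off the domain of h; only used at points where h is finite. *)
Definition hval d (h : vec d -> option R) (x : vec d) : R :=
  if h x is Some a then a else 0.

(* The coefficient of A is -L/10 (21 N^2 - N - 2) <= 0: this is where the step size
   eta = 1/(5 L N) is needed. *)
Lemma lyapunov_row_arith (N L eta Fy Fx V G A T S : R) :
  1 <= N -> 0 < L -> eta = / (5 * L * N) -> 0 <= A -> 0 <= S ->
  T <= N * ((1 + (2 * N - 1)) * A) + (1 + / (2 * N - 1)) * S ->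
  Fy <= Fx + eta / 2 * V - / (2 * eta) * G - (/ (2 * eta) - L / 2) * A ->
  N * Fy + L / (5 * N) * ((N - 1) * T + N * A)
  <= N * (Fx + eta / 2 * V - / (2 * eta) * G) + L / 5 * (2 * (N - 1) / (2 * N - 1)) * S.
Proof.
move=> N1 L0 eta_def A0 S0 T_le Fy_le.
have k_def : / (2 * eta) = 5 * L * N / 2 by rewrite eta_def; field; lra.
rewrite k_def in Fy_le *.
have c0 : 0 <= L / (5 * N) * (N - 1).
  have : 0 < L / (5 * N) by apply: Rdiv_lt_0_compat; lra.
  nra.
have := Rmult_le_compat_l _ _ _ c0 T_le.
have -> : L / (5 * N) * (N - 1) * (N * ((1 + (2 * N - 1)) * A) + (1 + / (2 * N - 1)) * S)
    = 2 * L / 5 * (N - 1) * N * A + L / 5 * (2 * (N - 1) / (2 * N - 1)) * S.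
  by field; lra.
have -> : L / (5 * N) * ((N - 1) * T + N * A) = L / (5 * N) * (N - 1) * T + L / 5 * A.
  by field; lra.
have coeffA : 0 <= L / 10 * (21 * N * N - N - 2) * A.
  by apply: Rmult_le_pos => //; apply: Rmult_le_pos; nra.
move=> T_bound; nra.
Qed.

Lemma lyapunov_total_arith (N L eta Fx G S SV : R) :
  1 <= N -> 0 < L -> eta = / (5 * L * N) -> 0 <= S -> SV <= L ^ 2 * S ->
  N * (N * Fx + eta / 2 * SV - N * G) + N * (L / 5 * (2 * (N - 1) / (2 * N - 1)) * S)
  <= N * N * (Fx + L / (5 * N) * S - G).
Proof.
move=> N1 L0 eta_def S0 SV_le.
have eta0 : 0 < eta by rewrite eta_def; apply: Rinv_0_lt_compat; nra.
have := Rmult_le_compat_l (N * (eta / 2)) _ _ ltac:(nra) SV_le.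
have -> : N * (eta / 2) * (L ^ 2 * S) = L / 10 * S by rewrite eta_def; field; lra.
have -> : N * N * (Fx + L / (5 * N) * S - G)
    = N * (N * Fx - N * G) + L / 10 * S + N * (L / 5 * (2 * (N - 1) / (2 * N - 1)) * S)
      + L / 10 * S / (2 * N - 1).
  by field; lra.
have : 0 <= L / 10 * S / (2 * N - 1).
  have : 0 < / (2 * N - 1) by apply: Rinv_0_lt_compat; lra.
  by move=> ?; apply: Rmult_le_pos; [apply: Rmult_le_pos|]; lra.
have -> : N * (N * Fx + eta / 2 * SV - N * G) = N * (N * Fx - N * G) + N * (eta / 2) * SV.
  by ring.
lra.
Qed.

Section ProxGradientStep.
Variables (n d : nat) (L : R) (fs : 'I_n -> vec d -> R) (gs : 'I_n -> vec d -> vec d).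
Variables (h : vec d -> option R) (prox : vec d -> vec d) (eta : R).
Hypotheses (n_gt0 : (0 < n)%N) (L_gt0 : 0 < L) (eta_gt0 : 0 < eta).
Hypotheses (fs_grad : forall i, is_gradient (fs i) (gs i)).
Hypotheses (gs_lip : forall i, lipschitz_grad L (gs i)).
Hypotheses (h_convex : convex_fun h) (prox_spec : forall x, is_prox eta h x (prox x)).

Definition objective (x : vec d) : R := favg fs x + hval h x.

Lemma favg_descent x y :
  favg fs y <= favg fs x + dot (gradf gs x) (vsub y x) + L / 2 * sqnorm (vsub y x).
Proof.
have y_def : y = vadd x (vsub y x).
  by apply: functional_extensionality => k; rewrite /vadd /vsub; ring.
rewrite /gradf dot_vavg /favg.
have n0 := INR_gt0 n_gt0; have n0' : 0 < / INR n by apply: Rinv_0_lt_compat.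
have := ler_rsum (fun i => descent_lemma (fs_grad i) x (vsub y x) (gs_lip i) L_gt0).
rewrite -y_def !rsumD rsum_const card_ord => sum_le.
apply: Rle_trans (Rmult_le_compat_l _ _ _ (Rlt_le _ _ n0') sum_le) _.
rewrite !Rmult_plus_distr_l.
have -> : / INR n * (INR n * (L / 2 * sqnorm (vsub y x))) = L / 2 * sqnorm (vsub y x).
  by field; lra.
exact: Rle_refl.
Qed.

Lemma prox_finite x : exists a, h (prox x) = Some a.
Proof. by have [a [a_def _]] := prox_spec x; exists a. Qed.

(* z is the exact proximal-gradient step, y the step along the estimate v of the
   gradient u; the cross term <z - y, v - u> is absorbed by Young's inequality. *)
Lemma prox_step_descent x v hx : h x = Some hx ->
  let u := gradf gs x in
  let y := prox (vsub x (vscale eta v)) in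
  let z := prox (vsub x (vscale eta u)) in
  objective y <= objective x + eta / 2 * sqnorm (vsub v u)
                 - / (2 * eta) * sqnorm (vsub z x)
                 - (/ (2 * eta) - L / 2) * sqnorm (vsub y x).
Proof.
move=> hx_def u y z.
have [hy hy_def] := prox_finite (vsub x (vscale eta v)).
have [hz hz_def] := prox_finite (vsub x (vscale eta u)).
have opt_y := prox_variational eta_gt0 h_convex (prox_spec _) hy_def hz_def.
have opt_z := prox_variational eta_gt0 h_convex (prox_spec _) hz_def hx_def.
have cross := young (vsub z y) (vsub v u) eta_gt0.
have descent := favg_descent x y; rewrite -/u in descent.
rewrite /objective /hval -/y -/z hx_def hy_def; rewrite -/y -/z in opt_y opt_z.
have cross_terms : / eta * dot (vsub y (vsub x (vscale eta v))) (vsub z y)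
          + / eta * dot (vsub z (vsub x (vscale eta u))) (vsub x z)
          + dot u (vsub y x)
    = dot (vsub z y) (vsub v u) - / (2 * eta) * sqnorm (vsub z x)
      - / (2 * eta) * sqnorm (vsub y x) - / (2 * eta) * sqnorm (vsub z y).
  rewrite /sqnorm /dot -!rsumZ -!rsumD -!rsumB; apply: rsum_ext => k.
  rewrite /vsub /vscale /u; field; lra.
lra.
Qed.

Definition lyapunov (st : saga_state n d) : R :=
  objective st.1 + L / (5 * INR n) * rsum (fun k => sqnorm (vsub st.1 (st.2 k))).

Lemma grad_map_sqnorm x :
  eta / 2 * norm (grad_map gs prox eta x) ^ 2
  = / (2 * eta) * sqnorm (vsub (prox (vsub x (vscale eta (gradf gs x)))) x).
Proof.
rewrite norm_sq /grad_map /sqnorm /dot -!rsumZ; apply: rsum_ext => k.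
by rewrite /vscale /vsub; field; lra.
Qed.

Lemma saga_estimate_variance x al :
  let v i := vadd (vsub (gs i x) (gs i (al i))) (vavg (fun k => gs k (al k))) in
  rsum (fun i => sqnorm (vsub (v i) (gradf gs x)))
  <= L ^ 2 * rsum (fun k => sqnorm (vsub x (al k))).
Proof.
move=> v; set a := fun i => vsub (gs i x) (gs i (al i)).
have centered i : sqnorm (vsub (v i) (gradf gs x)) = sqnorm (vsub (a i) (vavg a)).
  congr sqnorm; apply: functional_extensionality => c; rewrite /v /a /gradf /vavg /vadd /vsub rsumB.
  set Sx := rsum (fun k : 'I_n => gs k x c); set Sal := rsum (fun k : 'I_n => gs k (al k) c).
  ring.
rewrite (rsum_ext centered); apply: Rle_trans (sum_sqnorm_centered_le n_gt0 a) _.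
rewrite -rsumZ; apply: ler_rsum => i.
exact: sqnorm_le_of_norm_le (Rlt_le _ _ L_gt0) (gs_lip i x (al i)).
Qed.

Hypothesis eta_def : eta = / (5 * L * INR n).

Lemma lyapunov_sum_table_updates x al i hx : h x = Some hx ->
  let u := gradf gs x in
  let v := vadd (vsub (gs i x) (gs i (al i))) (vavg (fun k => gs k (al k))) in
  let z := prox (vsub x (vscale eta u)) in
  rsum (fun j => lyapunov (saga_step gs prox eta (x, al) (i, j)))
  <= INR n * (objective x + eta / 2 * sqnorm (vsub v u) - / (2 * eta) * sqnorm (vsub z x))
     + L / 5 * (2 * (INR n - 1) / (2 * INR n - 1)) * rsum (fun k => sqnorm (vsub x (al k))).
Proof.
move=> hx_def u v z; have N1 := INR_ge1 n_gt0; set N := INR n in N1 *.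
set y := prox (vsub x (vscale eta v)).
have -> : rsum (fun j => lyapunov (saga_step gs prox eta (x, al) (i, j)))
    = rsum (fun j => objective y
               + L / (5 * N) * rsum (fun k => sqnorm (vsub y (if k == j then x else al k)))).
  by apply: rsum_ext.
rewrite rsumD rsum_const card_ord rsumZ sum_sqnorm_table_update -/N.
have beta0 : 0 < 2 * N - 1 by lra.
have := ler_rsum (fun k => sqnorm_sub_le x y (al k) beta0).
rewrite rsumD rsum_const card_ord !rsumZ -/N => table.
apply: lyapunov_row_arith table (prox_step_descent v hx_def) => //.
- exact: sqnorm_ge0.
- by apply: rsum_ge0 => k; apply: sqnorm_ge0.
Qed.

Lemma lyapunov_expected_decrease x al hx : h x = Some hx ->
  rsum (fun ij => lyapunov (saga_step gs prox eta (x, al) ij))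
  <= INR #|{: 'I_n * 'I_n}| * (lyapunov (x, al) - eta / 2 * norm (grad_map gs prox eta x) ^ 2).
Proof.
move=> hx_def; have N1 := INR_ge1 n_gt0.
rewrite rsum_pair card_prod card_ord mult_INR grad_map_sqnorm.
have := ler_rsum (fun i => lyapunov_sum_table_updates al i hx_def).
rewrite rsumD rsum_const card_ord rsumZ rsumB rsumD !rsum_const !card_ord rsumZ => rows.
apply: Rle_trans rows _.
apply: lyapunov_total_arith (saga_estimate_variance x al) => //.
by apply: rsum_ge0 => k; apply: sqnorm_ge0.
Qed.

End ProxGradientStep.

Section ResampleCoordinate.
Variables (I A : finType) (i0 : I).

Definition ffun_set (w : {ffun I -> A}) (q : A) : {ffun I -> A} :=
  [ffun k => if k == i0 then q else w k].

Let swap (wp : {ffun I -> A} * A) := (ffun_set wp.1 wp.2, wp.1 i0).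

Let swapK : involutive swap.
Proof.
move=> [w p]; rewrite /swap /=; congr pair; last by rewrite ffunE eqxx.
by apply/ffunP => k; rewrite !ffunE; case: eqP => [->|].
Qed.

(* If H ignores the i0-th coordinate of w, then evaluating at p = w i0 amounts to
   drawing p independently: swap w i0 with p. *)
Lemma rsum_resample_coord (H : {ffun I -> A} -> A -> R) :
  (forall w p q, H (ffun_set w q) p = H w p) ->
  INR #|A| * rsum (fun w => H w (w i0)) = rsum (fun w => rsum (H w)).
Proof.
move=> H_indep; rewrite -(rsum_pair (fun wp => H wp.1 wp.2)).
have -> : rsum (fun wp : {ffun I -> A} * A => H wp.1 wp.2)
        = rsum (fun wp => H (swap wp).1 ((swap wp).1 i0)).
  by apply: rsum_ext => -[w p] /=; rewrite H_indep ffunE eqxx.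
have -> : rsum (fun wp => H (swap wp).1 ((swap wp).1 i0))
        = rsum (fun wp : {ffun I -> A} * A => H wp.1 (wp.1 i0)).
  by rewrite /rsum [RHS](reindex_inj (can_inj swapK)).
rewrite (rsum_pair (fun wp => H wp.1 (wp.1 i0))) -rsumZ.
by apply: rsum_ext => w /=; rewrite rsum_const.
Qed.

End ResampleCoordinate.

Section Expectation.
Variables (n d : nat) (L : R) (fs : 'I_n -> vec d -> R) (gs : 'I_n -> vec d -> vec d).
Variables (h : vec d -> option R) (prox : vec d -> vec d) (x0 : vec d) (h0 : R) (T : nat).
Hypotheses (n_gt0 : (0 < n)%N) (L_gt0 : 0 < L).
Hypotheses (fs_grad : forall i, is_gradient (fs i) (gs i)).
Hypotheses (gs_lip : forall i, lipschitz_grad L (gs i)).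
Hypothesis h_convex : convex_fun h.
Hypothesis prox_spec : forall x, is_prox (/ (5 * L * INR n)) h x (prox x).
Hypothesis h0_def : h x0 = Some h0.

Let eta := / (5 * L * INR n).
Let step := saga_step gs prox eta.
Let lyap := lyapunov L fs h.

Definition saga_state_at (t : nat) (w : outcome n T) : saga_state n d :=
  foldl step (x0, fun _ => x0) (take t [seq w s | s <- enum 'I_T]).

Definition lyapunov_total (t : nat) : R :=
  rsum (fun w : outcome n T => lyap (saga_state_at t w)).

Definition grad_map_sq_total (t : nat) : R :=
  rsum (fun w : outcome n T => norm (grad_map gs prox eta (saga_state_at t w).1) ^ 2).

Lemma step_size_gt0 : 0 < eta.
Proof. by apply/Rinv_0_lt_compat/Rmult_lt_0_compat; [lra | apply: INR_gt0]. Qed.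

Lemma saga_state_finite t w : exists a, h (saga_state_at t w).1 = Some a.
Proof.
rewrite /saga_state_at; elim/last_ind: (take t _) => [|l [i j] _]; first by exists h0.
by rewrite foldl_rcons; case: (foldl step _ l) => x al; exact: prox_finite prox_spec _.
Qed.

Section Time.
Variables (t : nat) (t_lt_T : (t < T)%N).
Let now : 'I_T := Ordinal t_lt_T.

Lemma saga_state_ffun_set w q : saga_state_at t (ffun_set now w q) = saga_state_at t w.
Proof.
rewrite /saga_state_at; congr foldl; rewrite -[LHS]map_take -[RHS]map_take.
apply/eq_in_map => s s_in.
rewrite ffunE; case: eqP => // s_now; exfalso.
have : val s \in map val (take t (enum 'I_T)) by apply: map_f.
by rewrite map_take val_enum_ord take_iota mem_iota s_now /= add0n ltnNge geq_minl.
Qed.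

Lemma saga_state_succ w : saga_state_at t.+1 w = step (saga_state_at t w) (w now).
Proof.
rewrite /saga_state_at (take_nth (w now)); last by rewrite size_map size_enum_ord.
rewrite foldl_rcons; congr step.
rewrite (nth_map now) ?size_enum_ord //; congr (w _).
by apply: val_inj; rewrite /= nth_enum_ord.
Qed.

Lemma lyapunov_total_step :
  lyapunov_total t.+1 + eta / 2 * grad_map_sq_total t <= lyapunov_total t.
Proof.
rewrite /lyapunov_total /grad_map_sq_total.
set c := INR #|{: 'I_n * 'I_n}|.
have c0 : 0 < c by rewrite /c card_prod card_ord mult_INR; have := INR_gt0 n_gt0; nra.
have resample := @rsum_resample_coord _ _ now (fun w p => lyap (step (saga_state_at t w) p))
  (fun w p q => congr1 (fun st => lyap (step st p)) (saga_state_ffun_set w q)).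
have decrease w : rsum (fun p => lyap (step (saga_state_at t w) p))
    <= c * (lyap (saga_state_at t w)
            - eta / 2 * norm (grad_map gs prox eta (saga_state_at t w).1) ^ 2).
  have [a a_def] := saga_state_finite t w.
  move: a_def; case: (saga_state_at t w) => x al a_def.
  exact (lyapunov_expected_decrease n_gt0 L_gt0 step_size_gt0 fs_grad gs_lip h_convex
    prox_spec erefl al a_def).
have := ler_rsum decrease.
rewrite -resample rsumZ rsumB rsumZ.
under rsum_ext => w do rewrite -saga_state_succ.
move=> /(Rmult_le_reg_l _ _ _ c0).
by rewrite -/(lyapunov_total t.+1) -/(lyapunov_total t) -/(grad_map_sq_total t); lra.
Qed.

End Time.

Lemma lyapunov_telescope t : (t <= T)%N ->
  lyapunov_total t + eta / 2 * \big[Rplus/0]_(0 <= s < t) grad_map_sq_total s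
  <= lyapunov_total 0.
Proof.
elim: t => [_|t IH t_lt_T]; first by rewrite big_mkord big_ord0; lra.
rewrite big_nat_recr //= Rmult_plus_distr_l.
have := lyapunov_total_step t_lt_T; have := IH (ltnW t_lt_T); lra.
Qed.

Lemma lyapunov_total_init :
  lyapunov_total 0 = INR #|{: outcome n T}| * objective fs h x0.
Proof.
rewrite -rsum_const; apply: rsum_ext => w.
rewrite /lyap /lyapunov /saga_state_at take0 /=.
have -> : rsum (fun _ : 'I_n => sqnorm (vsub x0 x0)) = 0.
  rewrite -(rsum0 'I_n); apply: rsum_ext => k.
  by rewrite /sqnorm /dot -(rsum0 'I_d); apply: rsum_ext => i; rewrite /vsub; ring.
ring.
Qed.

Variables (xs : vec d) (hs : R).
Hypothesis xs_opt : forall y hy, h y = Some hy -> favg fs xs + hs <= favg fs y + hy.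

Lemma lyapunov_total_ge_opt t :
  INR #|{: outcome n T}| * (favg fs xs + hs) <= lyapunov_total t.
Proof.
rewrite -rsum_const; apply: ler_rsum => w; set st := saga_state_at t w.
have [a a_def] := saga_state_finite t w; rewrite -/st in a_def.
have c0 : 0 < L / (5 * INR n).
  by apply: Rdiv_lt_0_compat; [| have := INR_gt0 n_gt0]; lra.
have S0 : 0 <= rsum (fun k => sqnorm (vsub st.1 (st.2 k))).
  by apply: rsum_ge0 => k; apply: sqnorm_ge0.
have := xs_opt a_def.
rewrite /lyap /lyapunov /objective /hval a_def; nra.
Qed.

End Expectation.

(* The argument yields the constant 10 L n, which is at most 50 L n^2 / (5 n - 2). *)
Lemma gradient_rate_arith (N L T M SG D : R) :
  1 <= N -> 0 < L -> 0 < T -> 0 < M -> 0 <= D ->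
  / (5 * L * N) / 2 * SG <= M * D ->
  / T * (/ M * SG) <= 50 * L * N ^ 2 / (5 * N - 2) * D / T.
Proof.
move=> N1 L0 T0 M0 D0 SG_le.
have SG_le' : / M * SG <= 10 * L * N * D.
  have -> : / M * SG = 10 * L * N * / M * (/ (5 * L * N) / 2 * SG) by field; lra.
  have -> : 10 * L * N * D = 10 * L * N * / M * (M * D) by field; lra.
  apply: Rmult_le_compat_l => //.
  by apply/Rlt_le/Rmult_lt_0_compat; [nra | apply: Rinv_0_lt_compat].
have const_le : 10 * L * N * D <= 50 * L * N ^ 2 / (5 * N - 2) * D.
  have -> : 50 * L * N ^ 2 / (5 * N - 2) = 10 * L * N + 20 * L * N / (5 * N - 2).
    by field; lra.
  have : 0 <= 20 * L * N / (5 * N - 2).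
    by apply/Rlt_le/Rdiv_lt_0_compat; nra.
  nra.
rewrite /Rdiv [_ * / T]Rmult_comm; apply: Rmult_le_compat_l.
  exact/Rlt_le/Rinv_0_lt_compat.
lra.
Qed.

Unset Implicit Arguments.

Theorem theorem3 (n d : nat) (L : R)
  (fs : 'I_n -> vec d -> R) (gs : 'I_n -> vec d -> vec d)
  (h : vec d -> option R) (prox : vec d -> vec d)
  (xs : vec d) (hs : R) (x0 : vec d) (T : nat) :
  (1 <= n)%N -> (1 <= d)%N -> 0 < L ->
  (forall i, is_gradient (fs i) (gs i)) ->
  (forall i, lipschitz_grad L (gs i)) ->
  proper_fun h -> lsc_fun h -> convex_fun h -> closed_dom h ->
  h xs = Some hs ->
  (forall y hy, h y = Some hy -> favg fs xs + hs <= favg fs y + hy) ->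
  (forall x, is_prox (/ (5 * L * INR n)) h x (prox x)) ->
  (1 <= T)%N ->
  forall h0, h x0 = Some h0 ->
    expected_gm_sq gs prox (/ (5 * L * INR n)) x0 T
    <= 50 * L * (INR n)^2 / (5 * INR n - 2)
       * ((favg fs x0 + h0) - (favg fs xs + hs)) / INR T.
Proof.
move=> n_gt0 _ L_gt0 fs_grad gs_lip _ _ h_convex _ _ xs_opt prox_spec T_gt0 h0 h0_def.
have descent := lyapunov_telescope n_gt0 L_gt0 fs_grad gs_lip h_convex prox_spec h0_def
  (leqnn T).
have lower := lyapunov_total_ge_opt gs T n_gt0 L_gt0 prox_spec h0_def xs_opt T.
rewrite lyapunov_total_init /objective /hval h0_def in descent.
have gap0 : 0 <= favg fs x0 + h0 - (favg fs xs + hs) by have := xs_opt _ _ h0_def; lra.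
have outcomes_gt0 : 0 < INR #|{: outcome n T}|.
  by apply/lt_0_INR/ltP; rewrite card_ffun card_prod card_ord expn_gt0 muln_gt0 n_gt0.
have -> : expected_gm_sq gs prox (/ (5 * L * INR n)) x0 T
    = / INR T * (/ INR #|{: outcome n T}|
                 * \big[Rplus/0]_(0 <= s < T) grad_map_sq_total L gs prox x0 T s).
  by rewrite /expected_gm_sq big_mkord rsumZ.
apply: gradient_rate_arith (INR_ge1 n_gt0) L_gt0 _ outcomes_gt0 gap0 _.
  exact/lt_0_INR/ltP.
lra.
Qed.
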